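(* There exists $\beta_2(d)>0$ such that if $|\beta|\le\beta_2(d)$, then for every non-null loop sequence $s$, $$\sum_{X\in\mathcal{X}(s)}|w_\beta(X)|<\infty.$$
   Context: Lattice, paths and loops. $E$ is the set of directed nearest-neighbour edges of $\mathbb{Z}^d$ ($d\ge2$); $e$ goes from $u(e)$ to $v(e)$, $e^{-1}$ is the reversed edge; $e$ is positively oriented if $v(e)$ is lexicographically larger than $u(e)$. A path is a sequence $e_1\cdots e_n$ with $v(e_i)=u(e_{i+1})$, closed if $v(e_n)=u(e_1)$; the null path is closed. Cycles are classes of closed paths under cyclic rotation; each cycle has a first edge fixed by an arbitrary rule and ''location $k$'' is its $k$-th edge. A path has a backtrack at $i\le n-1$ if $e_{i+1}=e_i^{-1}$; a closed path also at $n$ if $e_1=e_n^{-1}$; erasing a backtrack at $i<n$ gives $e_1\cdots e_{i-1}e_{i+2}\cdots e_n$, at $n$ gives $e_2\cdots e_{n-1}$; successive erasures until none remain give a well-defined cycle $[l]$. A loop is a cycle without backtracks (including the null loop). A plaquette is a nonbacktracking closed path of length 4. Loop sequences: finite sequences of loops modulo inserting/deleting null loops; minimal representation has no null loops; $|s|=\sum|l_i|$. Operations. For non-null loops $l,l'$ and locations $x,y$: same edge $e$: $l=aeb$, $l'=ced$, $l\oplus_{x,y}l'=[aedceb]$, $l\ominus_{x,y}l'=[ac^{-1}d^{-1}b]$; $e$ vs $e^{-1}$: $l=aeb$, $l'=ce^{-1}d$, $l\oplus_{x,y}l'=[aec^{-1}d^{-1}eb]$, $l\ominus_{x,y}l'=[adcb]$.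 Positive/negative deformations of $l$: $l\oplus_{x,y}p$, $l\ominus_{x,y}p$ for plaquettes $p$ containing the edge at location $x$ of $l$ or its inverse. Distinct locations $x,y$: $l=aebec$ (displayed $e$'s at $x,y$ respectively) gives the positive splitting $([aec],[be])$; $l=aebe^{-1}c$ gives the negative splitting $([ac],[b])$. A deformation (splitting) of a loop sequence replaces one component of its minimal representation by a deformation (by the two loops of a splitting) of it. Trajectories. A trajectory is a sequence $(s_0,s_1,\dots)$ of loop sequences with each $s_{i+1}$ a deformation or splitting of $s_i$; vanishing trajectories are finite and end at the null loop sequence; $\mathcal{X}(s)$ is the set of vanishing trajectories starting at $s$. $w_\beta(s,s')=-\beta/|s|$, $\beta/|s|$, $-1/|s|$, $1/|s|$ for positive deformation, negative deformation, positive splitting, negative splitting respectively; $w_\beta(X)=\prod w_\beta(s_i,s_{i+1})$. *)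

From Stdlib Require Import Reals ZArith List Relations.
Import ListNotations.
Open Scope R_scope.

(** Directed nearest-neighbour edges of Z^d: an edge is given by its start
    vertex [src] (a point of Z^d, a list of d integers), a coordinate
    direction [dir] (< d) and a sign [pos] (true: +1, false: -1). *)
Record edge := mkEdge { src : list Z; dir : nat; pos : bool }.

Definition edge_ok (d : nat) (e : edge) : Prop :=
  length (src e) = d /\ (dir e < d)%nat.

Fixpoint shift (v : list Z) (i : nat) (b : bool) : list Z :=
  match v, i with
  | [], _ => []
  | x :: v', O => (if b then (x + 1)%Z else (x - 1)%Z) :: v'
  | x :: v', S i' => x :: shift v' i' b
  end.

Definition tgt (e : edge) : list Z := shift (src e) (dir e) (pos e).

Definition inv (e : edge) : edge := mkEdge (tgt e) (dir e) (negb (pos e)).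

Fixpoint is_path (p : list edge) : Prop :=
  match p with
  | e1 :: ((e2 :: _) as t) => tgt e1 = src e2 /\ is_path t
  | _ => True
  end.

Definition closed_path (d : nat) (p : list edge) : Prop :=
  Forall (edge_ok d) p /\ is_path p /\
  match p with [] => True | e :: _ => tgt (last p e) = src e end.

Definition rev_inv (p : list edge) : list edge := rev (map inv p).

(** One backtrack erasure of a closed path: at i < n, or at n
    (when e_1 = e_n^{-1}, giving e_2 ... e_{n-1}). *)
Definition erase1 (p q : list edge) : Prop :=
  (exists a e b, p = a ++ e :: inv e :: b /\ q = a ++ b) \/
  (exists e m, p = inv e :: m ++ [e] /\ q = m).

Definition no_backtrack (p : list edge) : Prop := ~ exists q, erase1 p q.

Definition reduce (p q : list edge) : Prop :=
  clos_refl_trans _ erase1 p q /\ no_backtrack q.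

Definition rot_eq (p q : list edge) : Prop :=
  exists a b, p = a ++ b /\ q = b ++ a.

(** a loop (representative of a cycle without backtracks); [] = null loop *)
Definition is_loop (d : nat) (l : list edge) : Prop :=
  closed_path d l /\ no_backtrack l.

Definition plaquette (d : nat) (p : list edge) : Prop :=
  closed_path d p /\ no_backtrack p /\ length p = 4%nat.

(** loop sequences, in minimal representation (no null loops) *)
Definition lseq := list (list edge).

Definition is_lseq (d : nat) (s : lseq) : Prop :=
  Forall (fun l => is_loop d l /\ l <> []) s.

Definition lsize (s : lseq) : nat := fold_right (fun l n => (length l + n)%nat) 0%nat s.

Definition ls_eq (s t : lseq) : Prop := Forall2 rot_eq s t.

Definition plus_op (l l' r : list edge) : Prop :=
  (exists a e b c dd, l = a ++ e :: b /\ l' = c ++ e :: dd /\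
      reduce (a ++ e :: dd ++ c ++ e :: b) r) \/
  (exists a e b c dd, l = a ++ e :: b /\ l' = c ++ inv e :: dd /\
      reduce (a ++ e :: rev_inv c ++ rev_inv dd ++ e :: b) r).

Definition minus_op (l l' r : list edge) : Prop :=
  (exists a e b c dd, l = a ++ e :: b /\ l' = c ++ e :: dd /\
      reduce (a ++ rev_inv c ++ rev_inv dd ++ b) r) \/
  (exists a e b c dd, l = a ++ e :: b /\ l' = c ++ inv e :: dd /\
      reduce (a ++ dd ++ c ++ b) r).

Definition pos_def (d : nat) (l r : list edge) : Prop :=
  exists p, plaquette d p /\ plus_op l p r.
Definition neg_def (d : nat) (l r : list edge) : Prop :=
  exists p, plaquette d p /\ minus_op l p r.

(** splittings at two distinct locations x, y (locations read cyclically,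
    i.e. on any rotation of the representative) *)
Definition pos_split (l r1 r2 : list edge) : Prop :=
  exists l0 a e b c, rot_eq l l0 /\ l0 = a ++ e :: b ++ e :: c /\
    reduce (a ++ e :: c) r1 /\ reduce (b ++ [e]) r2.
Definition neg_split (l r1 r2 : list edge) : Prop :=
  exists l0 a e b c, rot_eq l l0 /\ l0 = a ++ e :: b ++ inv e :: c /\
    reduce (a ++ c) r1 /\ reduce b r2.

(** drop a null loop (passage to the minimal representation) *)
Definition nn (r : list edge) : lseq := match r with [] => [] | _ => [r] end.

Inductive kind := PosDef | NegDef | PosSplit | NegSplit.

Definition step (d : nat) (k : kind) (s s' : lseq) : Prop :=
  exists s1 l s2, s = s1 ++ l :: s2 /\
  match k with
  | PosDef => exists r, pos_def d l r /\ ls_eq s' (s1 ++ nn r ++ s2)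
  | NegDef => exists r, neg_def d l r /\ ls_eq s' (s1 ++ nn r ++ s2)
  | PosSplit => exists r1 r2, pos_split l r1 r2 /\ ls_eq s' (s1 ++ nn r1 ++ nn r2 ++ s2)
  | NegSplit => exists r1 r2, neg_split l r1 r2 /\ ls_eq s' (s1 ++ nn r1 ++ nn r2 ++ s2)
  end.

(** A trajectory starting at s0 is recorded as the list of its steps
    (kind of step, next loop sequence). *)
Fixpoint vanishing (d : nat) (s : lseq) (st : list (kind * lseq)) : Prop :=
  match st with
  | [] => s = []
  | (k, s') :: st' => step d k s s' /\ vanishing d s' st'
  end.

Definition w (beta : R) (k : kind) (s : lseq) : R :=
  match k with
  | PosDef => - beta / INR (lsize s)
  | NegDef => beta / INR (lsize s)
  | PosSplit => - 1 / INR (lsize s)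
  | NegSplit => 1 / INR (lsize s)
  end.

Fixpoint traj_weight (beta : R) (s : lseq) (st : list (kind * lseq)) : R :=
  match st with
  | [] => 1
  | (k, s') :: st' => w beta k s * traj_weight beta s' st'
  end.

Fixpoint traj_eq (t1 t2 : list (kind * lseq)) : Prop :=
  match t1, t2 with
  | [], [] => True
  | (k1, s1) :: u1, (k2, s2) :: u2 => k1 = k2 /\ ls_eq s1 s2 /\ traj_eq u1 u2
  | _, _ => False
  end.

(** sum_{X in X(s)} |w_beta(X)| < infinity : the partial sums over finite
    sets of distinct vanishing trajectories from s are bounded. *)
Definition summable_traj (d : nat) (beta : R) (s : lseq) : Prop :=
  exists B : R, forall L : list (list (kind * lseq)),
    (forall st, In st L -> vanishing d s st) ->
    ForallOrdPairs (fun t1 t2 => ~ traj_eq t1 t2) L ->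
    fold_right (fun st acc => Rabs (traj_weight beta s st) + acc) 0 L <= B.

(* Weight a loop of length m by phi(m) = 64^m / (64 m^2), with phi(0) = 1, and a loop
   sequence by the product of the weights of its loops.  The heart of the proof is the
   one-step inequality: the sum of |w_beta(s, s')| phi(s') over all successors s' of s is
   at most phi(s).  At an edge of a loop of length m there are 4 (2d)^3 deformations, each
   costing at most |beta| 64^4 phi(m), and the splittings there cost at most phi(m)/2 in
   total, because phi(t) phi(u) <= (2/64) phi(t+u) (1/t^2 + 1/u^2) and sum 1/k^2 <= 2.  So
   for small |beta| an edge contributes at most phi(m), and the factor 1/|s| in w_beta
   averages over the |s| edges of s.  Induction on the length of trajectories then bounds
   every finite sum over distinct vanishing trajectories from s by phi(s).
   This needs each step to have finitely many results up to rotation of loops: erasing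
   backtracks in any order gives the same cycle, computed by free reduction followed by
   stripping conjugating pairs from the ends. *)

From Pilot Require Import Defs.
From Stdlib Require Import Reals List.
From Stdlib Require Import ZArith Arith Relations Lia Lra ClassicalEpsilon.
Import ListNotations.
Local Open Scope nat_scope.

Arguments inv : simpl never.
Arguments tgt : simpl never.

Lemma edge_eq_dec (x y : edge) : {x = y} + {x <> y}.
Proof.
  decide equality; [apply Bool.bool_dec | apply Nat.eq_dec | apply (list_eq_dec Z.eq_dec)].
Qed.

Lemma shift_involutive v i b : Defs.shift (Defs.shift v i b) i (negb b) = v.
Proof.
  revert i; induction v as [|x v IH]; intros [|i]; simpl; auto.
  - destruct b; simpl; f_equal; lia.
  - now rewrite IH.
Qed.

Lemma tgt_inv e : tgt (inv e) = src e.
Proof. destruct e; apply shift_involutive. Qed.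

Lemma inv_involutive e : inv (inv e) = e.
Proof.
  destruct e as [v i b]. unfold inv at 1; simpl.
  now rewrite tgt_inv, Bool.negb_involutive.
Qed.

Lemma inv_inj x y : inv x = inv y -> x = y.
Proof. intros H. now rewrite <- (inv_involutive x), H, inv_involutive. Qed.

Lemma inv_sym x y : x = inv y -> y = inv x.
Proof. intros ->; now rewrite inv_involutive. Qed.

(** * Reduction of closed paths *)

Fixpoint reduced (w : list edge) : Prop :=
  match w with
  | x :: ((y :: _) as r) => y <> inv x /\ reduced r
  | _ => True
  end.

Definition push (x : edge) (v : list edge) : list edge :=
  match v with
  | [] => [x]
  | y :: r => if edge_eq_dec y (inv x) then r else x :: y :: r
  end.

Definition push_r (v : list edge) (x : edge) : list edge :=
  match v with
  | [] => [x]
  | _ => if edge_eq_dec (last v x) (inv x) then removelast v else v ++ [x]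
  end.

Definition free_red (q : list edge) : list edge := fold_right push [] q.

Ltac case_edges :=
  repeat match goal with |- context [edge_eq_dec ?a ?b] => destruct (edge_eq_dec a b) end.

Ltac app_norm := repeat rewrite <- app_assoc; simpl; repeat rewrite <- app_assoc; simpl.

Lemma reduced_tail x v : reduced (x :: v) -> reduced v.
Proof. destruct v; simpl; tauto. Qed.

Lemma reduced_cons x v :
  reduced v -> (forall h r, v = h :: r -> h <> inv x) -> reduced (x :: v).
Proof. destruct v as [|h r]; simpl; eauto. Qed.

Lemma reduced_app_l a b : reduced (a ++ b) -> reduced a.
Proof.
  induction a as [|x [|y a] IH]; simpl; auto.
  intros [H1 H2]; split; auto. apply IH, H2.
Qed.

Lemma reduced_app_r a b : reduced (a ++ b) -> reduced b.
Proof. induction a as [|x a IH]; simpl; auto. intros H; apply IH, (reduced_tail x), H. Qed.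

Lemma reduced_snoc v z :
  reduced v -> (forall m y, v = m ++ [y] -> y <> inv z) -> reduced (v ++ [z]).
Proof.
  induction v as [|x [|y v] IH]; intros H Hl; simpl; auto.
  - split; auto. intros E. apply (Hl [] x); auto using inv_sym.
  - destruct H as [H1 H2]. split; auto.
    apply IH; auto. intros m y' E. apply (Hl (x :: m)). now rewrite E.
Qed.

Lemma push_neq x h r : h <> inv x -> push x (h :: r) = x :: h :: r.
Proof. intros; simpl; now case_edges. Qed.

Lemma push_inv x r : push x (inv x :: r) = r.
Proof. simpl; now case_edges. Qed.

Lemma reduced_push x v : reduced v -> reduced (push x v).
Proof.
  destruct v as [|y v]; simpl; auto. intros H.
  case_edges; [eapply reduced_tail; eauto | simpl; auto].
Qed.

Lemma reduced_free_red q : reduced (free_red q).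
Proof. induction q; simpl; auto using reduced_push. Qed.

Lemma free_red_reduced v : reduced v -> free_red v = v.
Proof.
  induction v as [|x v IH]; intros H; simpl; auto.
  rewrite IH by (eapply reduced_tail; eauto).
  destruct v as [|y v]; simpl in *; auto. case_edges; tauto.
Qed.

Lemma free_red_app a b : free_red (a ++ b) = fold_right push (free_red b) a.
Proof. apply fold_right_app. Qed.

Lemma push_push_inv e v : reduced v -> push e (push (inv e) v) = v.
Proof.
  destruct v as [|y v]; intros H.
  - simpl; case_edges; congruence.
  - destruct (edge_eq_dec y e) as [->|Hy].
    + pose proof (push_inv (inv e) v) as Hp. rewrite inv_involutive in Hp. rewrite Hp.
      destruct v as [|z v]; simpl in *; auto. case_edges; tauto.
    + rewrite push_neq by now rewrite inv_involutive. apply push_inv.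
Qed.

Lemma free_red_erase a e b : free_red (a ++ e :: inv e :: b) = free_red (a ++ b).
Proof.
  rewrite !free_red_app. f_equal. apply push_push_inv, reduced_free_red.
Qed.

Lemma push_r_snoc v l x :
  push_r (v ++ [l]) x = if edge_eq_dec l (inv x) then v else v ++ [l; x].
Proof.
  unfold push_r. destruct (v ++ [l]) eqn:E; [now destruct v|].
  rewrite <- E, last_last, removelast_last, <- app_assoc. reflexivity.
Qed.

Lemma push_push_r y v x : push y (push_r v x) = push_r (push y v) x.
Proof.
  destruct v as [|l v _] using rev_ind.
  - simpl. case_edges; auto; exfalso; eauto using inv_sym.
  - rewrite push_r_snoc. destruct v as [|h m].
    + simpl; repeat (case_edges; simpl); try congruence.
      f_equal; apply inv_inj; congruence.
    + simpl app. destruct (edge_eq_dec h (inv y)) as [->|Hh].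
      * rewrite push_inv, push_r_snoc. case_edges; apply push_inv.
      * rewrite push_neq by exact Hh.
        change (y :: h :: m ++ [l]) with ((y :: h :: m) ++ [l]).
        rewrite push_r_snoc. case_edges; rewrite push_neq; auto.
Qed.

Lemma free_red_snoc q x : free_red (q ++ [x]) = push_r (free_red q) x.
Proof. induction q as [|y q IH]; simpl; auto. now rewrite IH, push_push_r. Qed.

Lemma length_push x v : length (push x v) <= S (length v).
Proof. destruct v as [|y v]; simpl; auto. case_edges; simpl; lia. Qed.

Lemma length_free_red q : length (free_red q) <= length q.
Proof.
  induction q as [|x q IH]; simpl; auto.
  pose proof (length_push x (free_red q)); lia.
Qed.

Fixpoint cyc_strip_n (n : nat) (w : list edge) : list edge :=
  match n with
  | O => w
  | S n' =>
      match w with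
      | y :: ((_ :: _) as r) =>
          if edge_eq_dec y (inv (last r y)) then cyc_strip_n n' (removelast r) else w
      | _ => w
      end
  end.

Definition cyc_strip (w : list edge) : list edge := cyc_strip_n (length w) w.

(** [cyc_red q] is the cycle [[q]] of the paper, up to rotation
    (see [reduce_rot_eq_cyc_red]). *)
Definition cyc_red (q : list edge) : list edge := cyc_strip (free_red q).

Lemma length_removelast (r : list edge) : length (removelast r) = pred (length r).
Proof.
  destruct r as [|x r _] using rev_ind; auto.
  rewrite removelast_last, length_app; simpl; lia.
Qed.

Lemma cyc_strip_n_fuel n m w :
  length w <= n -> length w <= m -> cyc_strip_n n w = cyc_strip_n m w.
Proof.
  revert m w; induction n as [|n IH]; intros [|m] w Hn Hm.
  - reflexivity.
  - destruct w; simpl in *; [reflexivity | lia].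
  - destruct w; simpl in *; [reflexivity | lia].
  - simpl. destruct w as [|y [|z r]]; auto. case_edges; auto.
    apply IH; rewrite length_removelast; simpl in *; lia.
Qed.

Lemma cyc_strip_conj z m : cyc_strip (inv z :: m ++ [z]) = cyc_strip m.
Proof.
  unfold cyc_strip. simpl length. rewrite length_app; simpl.
  destruct (m ++ [z]) as [|u r] eqn:E; [now destruct m|].
  rewrite <- E, last_last, removelast_last. case_edges; [|congruence].
  apply cyc_strip_n_fuel; lia.
Qed.

Lemma cyc_strip_id w : (forall z m, w <> inv z :: m ++ [z]) -> cyc_strip w = w.
Proof.
  intros H. unfold cyc_strip. destruct w as [|y [|u r]]; try reflexivity.
  change (cyc_strip_n (length (y :: u :: r)) (y :: u :: r)) with
    (if edge_eq_dec y (inv (last (u :: r) y))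
     then cyc_strip_n (length (u :: r)) (removelast (u :: r)) else y :: u :: r).
  case_edges; auto. exfalso.
  destruct (exists_last (l := u :: r) ltac:(discriminate)) as [r0 [z Er]].
  rewrite Er, last_last in e. apply (H z r0). now rewrite <- Er, e.
Qed.

Lemma length_cyc_strip_n n w : length (cyc_strip_n n w) <= length w.
Proof.
  revert w; induction n as [|n IH]; intros w; simpl; auto.
  destruct w as [|y [|u r]]; auto. case_edges; auto.
  rewrite IH, length_removelast; simpl; lia.
Qed.

Lemma length_cyc_red q : length (cyc_red q) <= length q.
Proof. eapply Nat.le_trans; [apply length_cyc_strip_n | apply length_free_red]. Qed.

Lemma rot_eq_refl p : rot_eq p p.
Proof. exists p, []. now rewrite app_nil_r. Qed.

Lemma rot_eq_sym p q : rot_eq p q -> rot_eq q p.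
Proof. intros [a [b [-> ->]]]. now exists b, a. Qed.

Lemma rot_eq_app a b : rot_eq (a ++ b) (b ++ a).
Proof. now exists a, b. Qed.

Lemma rot_eq_trans p q r : rot_eq p q -> rot_eq q r -> rot_eq p r.
Proof.
  intros [a [b [-> E]]] [c [d [E2 ->]]]. rewrite E in E2.
  apply app_eq_app in E2 as [l [[-> ->]|[-> ->]]].
  - exists (a ++ c), l. now rewrite !app_assoc.
  - exists l, (d ++ b). now rewrite !app_assoc.
Qed.

Lemma rot_eq_length p q : rot_eq p q -> length p = length q.
Proof. intros [a [b [-> ->]]]. rewrite !length_app. lia. Qed.

Lemma rot_eq_nil q : rot_eq [] q -> q = [].
Proof. intros [[|] [[|] [E ->]]]; now try discriminate. Qed.

Lemma cyc_strip_conj_inv z m : cyc_strip (z :: m ++ [inv z]) = cyc_strip m.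
Proof. pose proof (cyc_strip_conj (inv z) m) as H. now rewrite inv_involutive in H. Qed.

Lemma cyc_strip_rotations z m :
  reduced (z :: m) -> reduced (m ++ [z]) ->
  cyc_strip (z :: m) = z :: m /\ cyc_strip (m ++ [z]) = m ++ [z].
Proof.
  intros H1 H2. split; apply cyc_strip_id; intros y m' E.
  - injection E as -> ->.
    rewrite <- app_assoc in H2. apply reduced_app_r in H2. now destruct H2.
  - destruct m as [|u m]; injection E as -> E; [now destruct m'|].
    assert (z = y) as <-.
    { apply (f_equal (fun l => last l z)) in E. now rewrite !last_last in E. }
    destruct H1 as [H1 _]. now apply H1.
Qed.

Lemma cyc_strip_push_rot z v :
  reduced v -> rot_eq (cyc_strip (push z v)) (cyc_strip (push_r v z)).
Proof.
  intros Hv. destruct v as [|h w]; [apply rot_eq_refl|].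
  destruct (edge_eq_dec h (inv z)) as [->|Hh].
  - rewrite push_inv. destruct w as [|l w _] using rev_ind.
    + unfold push_r; simpl. case_edges; [apply rot_eq_refl | congruence].
    + change (inv z :: w ++ [l]) with ((inv z :: w) ++ [l]) in *.
      rewrite push_r_snoc. destruct (edge_eq_dec l (inv z)) as [->|Hl].
      * destruct (cyc_strip_rotations (inv z) w) as [-> ->].
        -- eapply reduced_app_l; eauto.
        -- eapply reduced_tail; eauto.
        -- apply (rot_eq_app w [inv z]).
      * replace ((inv z :: w) ++ [l; z]) with (inv z :: (w ++ [l]) ++ [z])
          by now rewrite <- app_assoc.
        rewrite cyc_strip_conj. apply rot_eq_refl.
  - rewrite push_neq by exact Hh.
    destruct (exists_last (l := h :: w) ltac:(discriminate)) as [v [l E]].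
    rewrite E in *. rewrite push_r_snoc.
    destruct (edge_eq_dec l (inv z)) as [->|Hl].
    + rewrite cyc_strip_conj_inv. apply rot_eq_refl.
    + replace (v ++ [l; z]) with ((v ++ [l]) ++ [z]) by now rewrite <- app_assoc.
      destruct (cyc_strip_rotations z (v ++ [l])) as [-> ->].
      * apply reduced_cons; auto. intros h' r E'. rewrite <- E in E'. congruence.
      * apply reduced_snoc; auto. intros m y E'. apply app_inj_tail in E' as [_ ->]. auto.
      * apply (rot_eq_app [z]).
Qed.

Lemma cyc_red_rot1 z q : rot_eq (cyc_red (z :: q)) (cyc_red (q ++ [z])).
Proof.
  unfold cyc_red. rewrite free_red_snoc.
  apply cyc_strip_push_rot, reduced_free_red.
Qed.

Lemma cyc_red_rot_eq p q : rot_eq p q -> rot_eq (cyc_red p) (cyc_red q).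
Proof.
  intros [a [b [-> ->]]]. revert b. induction a as [|z a IH]; intros b.
  - rewrite app_nil_r. apply rot_eq_refl.
  - eapply rot_eq_trans; [apply cyc_red_rot1|].
    replace (b ++ z :: a) with ((b ++ [z]) ++ a) by now rewrite <- app_assoc.
    rewrite <- app_assoc. apply IH.
Qed.

Lemma cyc_red_erase1 p p' : erase1 p p' -> rot_eq (cyc_red p) (cyc_red p').
Proof.
  intros [[a [e [b [-> ->]]]]|[e [m [-> ->]]]].
  - unfold cyc_red. rewrite free_red_erase. apply rot_eq_refl.
  - eapply rot_eq_trans; [apply cyc_red_rot1|].
    unfold cyc_red. rewrite <- app_assoc. simpl.
    rewrite free_red_erase, app_nil_r. apply rot_eq_refl.
Qed.

Lemma reduced_of_no_adjacent_inv r : (forall a x b, r <> a ++ x :: inv x :: b) -> reduced r.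
Proof.
  induction r as [|x [|y r] IH]; intros H; simpl; auto. split.
  - intros ->. now apply (H [] x r).
  - apply IH. intros a z b E. apply (H (x :: a) z b). now rewrite E.
Qed.

Lemma no_backtrack_reduced r : no_backtrack r -> reduced r.
Proof.
  intros H. apply reduced_of_no_adjacent_inv. intros a x b E.
  apply H. exists (a ++ b). left. now exists a, x, b.
Qed.

Lemma cyc_red_no_backtrack r : no_backtrack r -> cyc_red r = r.
Proof.
  intros H. unfold cyc_red. rewrite free_red_reduced by now apply no_backtrack_reduced.
  apply cyc_strip_id. intros z m E. apply H. exists m. right. now exists z, m.
Qed.

Lemma cyc_red_erasures p q : clos_refl_trans _ erase1 p q -> rot_eq (cyc_red p) (cyc_red q).
Proof.
  induction 1; eauto using cyc_red_erase1, rot_eq_refl, rot_eq_trans.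
Qed.

Lemma reduce_rot_eq_cyc_red q q' r : reduce q r -> rot_eq q q' -> rot_eq r (cyc_red q').
Proof.
  intros [Hqr Hr] Hq. rewrite <- (cyc_red_no_backtrack r Hr).
  eapply rot_eq_trans; [apply rot_eq_sym, cyc_red_erasures, Hqr | apply cyc_red_rot_eq, Hq].
Qed.

(** * Finitely many candidate successors *)

Fixpoint decomps {A : Type} (l : list A) : list (list A * A * list A) :=
  match l with
  | [] => []
  | x :: r => ([], x, r) :: map (fun '(a, e, b) => (x :: a, e, b)) (decomps r)
  end.

Lemma in_decomps {A} (a : list A) e b : In (a, e, b) (decomps (a ++ e :: b)).
Proof.
  induction a as [|x a IH]; simpl; auto.
  right. apply in_map_iff. now exists (a, e, b).
Qed.

Lemma decomps_spec {A} (l : list A) a e b : In (a, e, b) (decomps l) -> l = a ++ e :: b.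
Proof.
  revert a; induction l as [|x l IH]; intros a H; simpl in H; [contradiction|].
  destruct H as [H|H]; [now injection H as <- <- <-|].
  apply in_map_iff in H as [[[a' e'] b'] [E H]]. injection E as <- <- <-.
  simpl. f_equal. now apply IH.
Qed.

Lemma length_decomps {A} (l : list A) : length (decomps l) = length l.
Proof. induction l; simpl; auto. now rewrite length_map, IHl. Qed.

Lemma ls_eq_refl s : ls_eq s s.
Proof. induction s; constructor; auto using rot_eq_refl. Qed.

Lemma ls_eq_sym s t : ls_eq s t -> ls_eq t s.
Proof. induction 1; constructor; auto using rot_eq_sym. Qed.

Lemma ls_eq_trans s t u : ls_eq s t -> ls_eq t u -> ls_eq s u.
Proof.
  intros H; revert u; induction H as [|x y s t Hxy _ IH]; intros u H';
    inversion_clear H' as [|? z ? u' Hyz Htu]; constructor.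
  - eapply rot_eq_trans; eauto.
  - apply IH, Htu.
Qed.

Lemma ls_eq_nn r r' : rot_eq r r' -> ls_eq (nn r) (nn r').
Proof.
  intros H. destruct r as [|x r].
  - rewrite (rot_eq_nil _ H). constructor.
  - destruct r' as [|y r']; [now apply rot_eq_sym, rot_eq_nil in H|].
    constructor; [exact H | constructor].
Qed.

Lemma rot_eq_replace (a b a' b' X : list edge) :
  b ++ a = b' ++ a' -> rot_eq (a ++ X ++ b) (a' ++ X ++ b').
Proof.
  intros E. eapply rot_eq_trans; [apply (rot_eq_app a (X ++ b))|].
  rewrite <- app_assoc, E, app_assoc. apply (rot_eq_app (X ++ b') a').
Qed.

Lemma rot_eq_at l l' a (e : edge) b :
  rot_eq l l' -> l = a ++ e :: b ->
  exists a' b', l' = a' ++ e :: b' /\ b ++ a = b' ++ a'.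
Proof.
  intros [x [y [-> ->]]] E.
  apply app_eq_app in E as [m [[-> E]|[-> ->]]].
  - destruct m as [|z m]; simpl in E.
    + subst y. exists [], (b ++ a). now rewrite !app_nil_r.
    + injection E as -> ->. exists (y ++ a), m. now rewrite <- !app_assoc.
  - exists m, (b ++ x). now rewrite <- !app_assoc.
Qed.

Lemma rot_eq_at2 l' a (e e' : edge) b c :
  rot_eq (a ++ e :: b ++ e' :: c) l' ->
  (exists a' c', l' = a' ++ e :: b ++ e' :: c' /\ c' ++ a' = c ++ a) \/
  (exists a' b' c', l' = a' ++ e' :: b' ++ e :: c' /\ c' ++ a' = b /\ b' = c ++ a).
Proof.
  intros H. destruct (rot_eq_at _ _ a e (b ++ e' :: c) H eq_refl) as [a2 [b2 [-> E]]].
  rewrite <- app_assoc in E; simpl in E.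
  apply app_eq_app in E as [m [[-> ->]|[-> E]]].
  - right. exists m, (c ++ a), b2. now app_norm.
  - destruct m as [|z m]; simpl in E.
    + subst a2. right. exists [], (c ++ a), b. rewrite app_nil_r. now app_norm.
    + injection E as -> ->. left. exists a2, m. now app_norm.
Qed.

Definition out_edges (d : nat) (v : list Z) : list edge :=
  flat_map (fun i => [mkEdge v i true; mkEdge v i false]) (seq 0 d).

Definition paths3 (d : nat) (v : list Z) : list (list edge) :=
  flat_map (fun e1 => flat_map (fun e2 => map (fun e3 => [e1; e2; e3])
    (out_edges d (tgt e2))) (out_edges d (tgt e1))) (out_edges d v).

Lemma in_out_edges d e : dir e < d -> In e (out_edges d (src e)).
Proof.
  destruct e as [v i b]; simpl; intros H. apply in_flat_map. exists i.
  split; [apply in_seq; lia | destruct b; simpl; auto].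
Qed.

Lemma in_paths3 d v w1 w2 w3 :
  src w1 = v -> src w2 = tgt w1 -> src w3 = tgt w2 ->
  dir w1 < d -> dir w2 < d -> dir w3 < d ->
  In [w1; w2; w3] (paths3 d v).
Proof.
  intros <- E2 E3 H1 H2 H3. apply in_flat_map. exists w1. split; [now apply in_out_edges|].
  apply in_flat_map. exists w2. split; [rewrite <- E2; now apply in_out_edges|].
  apply in_map_iff. exists w3. split; [reflexivity | rewrite <- E3; now apply in_out_edges].
Qed.

Lemma length_in_paths3 d v w : In w (paths3 d v) -> length w = 3.
Proof.
  intros H. apply in_flat_map in H as [e1 [_ H]].
  apply in_flat_map in H as [e2 [_ H]]. apply in_map_iff in H as [e3 [<- _]].
  reflexivity.
Qed.

Lemma length_flat_map_const {A B} (f : A -> list B) l n :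
  (forall x, length (f x) = n) -> length (flat_map f l) = length l * n.
Proof. intros Hf. induction l; simpl; auto. now rewrite length_app, Hf, IHl. Qed.

Lemma length_out_edges d v : length (out_edges d v) = 2 * d.
Proof.
  unfold out_edges. rewrite (length_flat_map_const _ _ 2), length_seq; auto. lia.
Qed.

Lemma length_paths3 d v : length (paths3 d v) = 2 * d * (2 * d * (2 * d)).
Proof.
  unfold paths3. rewrite (length_flat_map_const _ _ (2 * d * (2 * d))), length_out_edges; auto.
  intros e1. rewrite (length_flat_map_const _ _ (2 * d)), length_out_edges; auto.
  intros e2. now rewrite length_map, length_out_edges.
Qed.

Lemma plaquette_paths3 d p c e dd :
  plaquette d p -> p = c ++ e :: dd -> In (dd ++ c) (paths3 d (tgt e)).
Proof.
  intros [[Hok [Hp Hc]] [_ Hl]] ->. rewrite Forall_forall in Hok.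
  assert (Hd : forall x, In x (c ++ e :: dd) -> dir x < d) by (intros x Hx; apply Hok, Hx).
  destruct c as [|c1 [|c2 [|c3 [|c4 c]]]]; destruct dd as [|d1 [|d2 [|d3 [|d4 dd]]]];
    rewrite ?length_app in Hl; simpl in Hl; try lia; simpl in Hp, Hc, Hd |- *;
    apply in_paths3; try (apply Hd; tauto); intuition.
Qed.

Lemma rev_inv_app a b : rev_inv (a ++ b) = rev_inv b ++ rev_inv a.
Proof. unfold rev_inv. now rewrite map_app, rev_app_distr. Qed.

Lemma length_rev_inv a : length (rev_inv a) = length a.
Proof. unfold rev_inv. now rewrite length_rev, length_map. Qed.

(** A deformation of [a ++ e :: b] at [e] yields, before backtrack erasure, [a ++ X ++ b]
    for one of these [X]. *)
Definition deform_inserts (d : nat) (e : edge) : list (kind * list edge) :=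
  map (fun w => (PosDef, e :: w ++ [e])) (paths3 d (tgt e)) ++
  map (fun w => (PosDef, e :: rev_inv w ++ [e])) (paths3 d (src e)) ++
  map (fun w => (NegDef, rev_inv w)) (paths3 d (tgt e)) ++
  map (fun w => (NegDef, w)) (paths3 d (src e)).

Definition deform_count (d : nat) : nat := 4 * (2 * d * (2 * d * (2 * d))).

Lemma length_deform_inserts d e : length (deform_inserts d e) = deform_count d.
Proof.
  unfold deform_inserts, deform_count. rewrite !length_app, !length_map, !length_paths3. lia.
Qed.

Lemma deform_inserts_spec d e k X :
  In (k, X) (deform_inserts d e) -> (k = PosDef \/ k = NegDef) /\ length X <= 5.
Proof.
  unfold deform_inserts. rewrite !in_app_iff, !in_map_iff.
  intros [[w [E Hw]]|[[w [E Hw]]|[[w [E Hw]]|[w [E Hw]]]]]; injection E as <- <-;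
    apply length_in_paths3 in Hw; simpl; rewrite ?length_app, ?length_rev_inv; simpl;
    split; auto; lia.
Qed.

Lemma pos_def_insert d l r :
  pos_def d l r -> exists a e b X,
    l = a ++ e :: b /\ In (PosDef, X) (deform_inserts d e) /\ reduce (a ++ X ++ b) r.
Proof.
  intros [p [Hp [[a [e [b [c [dd [El [Ep Hr]]]]]]]|[a [e [b [c [dd [El [Ep Hr]]]]]]]]]].
  - exists a, e, b, (e :: (dd ++ c) ++ [e]). split; [exact El|split].
    + apply in_or_app. left. apply in_map_iff. eexists; split; [reflexivity|].
      eapply plaquette_paths3; eauto.
    + now app_norm.
  - exists a, e, b, (e :: rev_inv (dd ++ c) ++ [e]). split; [exact El|split].
    + apply in_or_app. right. apply in_or_app. left. apply in_map_iff.
      eexists; split; [reflexivity|]. rewrite <- tgt_inv. eapply plaquette_paths3; eauto.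
    + rewrite rev_inv_app. now app_norm.
Qed.

Lemma neg_def_insert d l r :
  neg_def d l r -> exists a e b X,
    l = a ++ e :: b /\ In (NegDef, X) (deform_inserts d e) /\ reduce (a ++ X ++ b) r.
Proof.
  intros [p [Hp [[a [e [b [c [dd [El [Ep Hr]]]]]]]|[a [e [b [c [dd [El [Ep Hr]]]]]]]]]].
  - exists a, e, b, (rev_inv (dd ++ c)). split; [exact El|split].
    + do 2 (apply in_or_app; right). apply in_or_app. left. apply in_map_iff.
      eexists; split; [reflexivity|]. eapply plaquette_paths3; eauto.
    + rewrite rev_inv_app. now app_norm.
  - exists a, e, b, (dd ++ c). split; [exact El|split].
    + do 3 (apply in_or_app; right). apply in_map_iff.
      eexists; split; [reflexivity|]. rewrite <- tgt_inv. eapply plaquette_paths3; eauto.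
    + now app_norm.
Qed.

Definition deform_cands (d : nat) (l : list edge) : list (kind * lseq) :=
  flat_map (fun '(a, e, b) =>
    map (fun '(k, X) => (k, nn (cyc_red (a ++ X ++ b)))) (deform_inserts d e)) (decomps l).

(** Splittings of [a ++ x :: b ++ y :: c] at [x] and [y]; the two pieces come in either
    order because the cycle may be read from either location. *)
Definition split_pairs (a : list edge) (x : edge) (b c : list edge) : list (kind * lseq) :=
  [(PosSplit, nn (cyc_red (a ++ x :: c)) ++ nn (cyc_red (b ++ [x])));
   (PosSplit, nn (cyc_red (b ++ [x])) ++ nn (cyc_red (a ++ x :: c)));
   (NegSplit, nn (cyc_red (a ++ c)) ++ nn (cyc_red b));
   (NegSplit, nn (cyc_red b) ++ nn (cyc_red (a ++ c)))].

Definition split_cands (l : list edge) : list (kind * lseq) :=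
  flat_map (fun '(a, x, r) =>
    flat_map (fun '(b, _, c) => split_pairs a x b c) (decomps r)) (decomps l).

Definition loop_cands (d : nat) (l : list edge) : list (kind * lseq) :=
  deform_cands d l ++ split_cands l.

Definition cands (d : nat) (s : lseq) : list (kind * lseq) :=
  flat_map (fun '(t1, l, t2) =>
    map (fun '(k, rs) => (k, t1 ++ rs ++ t2)) (loop_cands d l)) (decomps s).

Lemma deform_covered d k l l' a e b X r :
  rot_eq l l' -> l = a ++ e :: b -> In (k, X) (deform_inserts d e) -> reduce (a ++ X ++ b) r ->
  exists rs, In (k, rs) (loop_cands d l') /\ ls_eq (nn r) rs.
Proof.
  intros Hl El HX Hr. destruct (rot_eq_at _ _ _ _ _ Hl El) as [a' [b' [-> E]]].
  exists (nn (cyc_red (a' ++ X ++ b'))). split.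
  - apply in_or_app. left. apply in_flat_map. exists (a', e, b'). split; [apply in_decomps|].
    apply in_map_iff. now exists (k, X).
  - apply ls_eq_nn. eapply reduce_rot_eq_cyc_red; [exact Hr|]. now apply rot_eq_replace.
Qed.

Lemma in_split_cands a x b y c z :
  In z (split_pairs a x b c) -> In z (split_cands (a ++ x :: b ++ y :: c)).
Proof.
  intros H. apply in_flat_map. exists (a, x, b ++ y :: c). split; [apply in_decomps|].
  apply in_flat_map. exists (b, y, c). split; [apply in_decomps | exact H].
Qed.

Lemma pos_split_covered d l l' r1 r2 :
  rot_eq l l' -> pos_split l r1 r2 ->
  exists rs, In (PosSplit, rs) (loop_cands d l') /\ ls_eq (nn r1 ++ nn r2) rs.
Proof.
  intros Hl [l0 [a0 [e [b0 [c0 [Hl0 [-> [Hr1 Hr2]]]]]]]].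
  assert (H0 : rot_eq (a0 ++ e :: b0 ++ e :: c0) l') by eauto using rot_eq_trans, rot_eq_sym.
  destruct (rot_eq_at2 _ _ _ _ _ _ H0) as [[a [c [-> E]]]|[a [b [c [-> [<- ->]]]]]].
  - exists (nn (cyc_red (a ++ e :: c)) ++ nn (cyc_red (b0 ++ [e]))). split.
    + apply in_or_app. right. apply in_split_cands. simpl; auto.
    + apply Forall2_app; apply ls_eq_nn; eapply reduce_rot_eq_cyc_red; eauto using rot_eq_refl.
      apply (rot_eq_replace _ _ _ _ [e]). auto.
  - exists (nn (cyc_red ((c0 ++ a0) ++ [e])) ++ nn (cyc_red (a ++ e :: c))). split.
    + apply in_or_app. right. apply in_split_cands. simpl; auto.
    + apply Forall2_app; apply ls_eq_nn; eapply reduce_rot_eq_cyc_red; eauto.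
      * replace ((c0 ++ a0) ++ [e]) with (c0 ++ (a0 ++ [e])) by now app_norm.
        replace (a0 ++ e :: c0) with ((a0 ++ [e]) ++ c0) by now app_norm. apply rot_eq_app.
      * replace ((c ++ a) ++ [e]) with (c ++ (a ++ [e])) by now app_norm.
        replace (a ++ e :: c) with ((a ++ [e]) ++ c) by now app_norm. apply rot_eq_app.
Qed.

Lemma neg_split_covered d l l' r1 r2 :
  rot_eq l l' -> neg_split l r1 r2 ->
  exists rs, In (NegSplit, rs) (loop_cands d l') /\ ls_eq (nn r1 ++ nn r2) rs.
Proof.
  intros Hl [l0 [a0 [e [b0 [c0 [Hl0 [-> [Hr1 Hr2]]]]]]]].
  assert (H0 : rot_eq (a0 ++ e :: b0 ++ inv e :: c0) l') by eauto using rot_eq_trans, rot_eq_sym.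
  destruct (rot_eq_at2 _ _ _ _ _ _ H0) as [[a [c [-> E]]]|[a [b [c [-> [<- ->]]]]]].
  - exists (nn (cyc_red (a ++ c)) ++ nn (cyc_red b0)). split.
    + apply in_or_app. right. apply in_split_cands. simpl; auto.
    + apply Forall2_app; apply ls_eq_nn; eapply reduce_rot_eq_cyc_red; eauto using rot_eq_refl.
      apply (rot_eq_replace _ _ _ _ []). auto.
  - exists (nn (cyc_red (c0 ++ a0)) ++ nn (cyc_red (a ++ c))). split.
    + apply in_or_app. right. apply in_split_cands. simpl; auto.
    + apply Forall2_app; apply ls_eq_nn; eapply reduce_rot_eq_cyc_red; eauto using rot_eq_app.
Qed.

Definition loop_step (d : nat) (k : kind) (l : list edge) (rs : lseq) : Prop :=
  match k with
  | PosDef => exists r, pos_def d l r /\ rs = nn r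
  | NegDef => exists r, neg_def d l r /\ rs = nn r
  | PosSplit => exists r1 r2, pos_split l r1 r2 /\ rs = nn r1 ++ nn r2
  | NegSplit => exists r1 r2, neg_split l r1 r2 /\ rs = nn r1 ++ nn r2
  end.

Lemma step_loop_step d k s s' :
  step d k s s' -> exists s1 l s2 rs,
    s = s1 ++ l :: s2 /\ loop_step d k l rs /\ ls_eq s' (s1 ++ rs ++ s2).
Proof.
  intros [s1 [l [s2 [-> H]]]]. exists s1, l, s2.
  destruct k; simpl in H |- *.
  - destruct H as [r [H Hs']]. exists (nn r). eauto.
  - destruct H as [r [H Hs']]. exists (nn r). eauto.
  - destruct H as [r1 [r2 [H Hs']]]. exists (nn r1 ++ nn r2). rewrite <- app_assoc. eauto 6.
  - destruct H as [r1 [r2 [H Hs']]]. exists (nn r1 ++ nn r2). rewrite <- app_assoc. eauto 6.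
Qed.

Lemma loop_step_covered d k l l' rs :
  rot_eq l l' -> loop_step d k l rs ->
  exists rs', In (k, rs') (loop_cands d l') /\ ls_eq rs rs'.
Proof.
  intros Hl. destruct k; simpl.
  - intros [r [H ->]]. destruct (pos_def_insert _ _ _ H) as [a [e [b [X [El [HX Hr]]]]]].
    eapply deform_covered; eauto.
  - intros [r [H ->]]. destruct (neg_def_insert _ _ _ H) as [a [e [b [X [El [HX Hr]]]]]].
    eapply deform_covered; eauto.
  - intros [r1 [r2 [H ->]]]. eapply pos_split_covered; eauto.
  - intros [r1 [r2 [H ->]]]. eapply neg_split_covered; eauto.
Qed.

Lemma step_covered d k s0 s s' :
  ls_eq s0 s -> step d k s0 s' ->
  exists c, In c (cands d s) /\ fst c = k /\ ls_eq s' (snd c).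
Proof.
  intros Hs Hstep. destruct (step_loop_step _ _ _ _ Hstep) as [s1 [l [s2 [rs [-> [Hl Hs']]]]]].
  apply Forall2_app_inv_l in Hs as [t1 [u [H1 [H2 ->]]]].
  inversion H2 as [|? l' ? t2 Hll' H3]; subst u.
  destruct (loop_step_covered _ _ _ _ _ Hll' Hl) as [rs' [Hin Hrs]].
  exists (k, t1 ++ rs' ++ t2). repeat split.
  - apply in_flat_map. exists (t1, l', t2). split; [apply in_decomps|].
    apply in_map_iff. now exists (k, rs').
  - eapply ls_eq_trans; [exact Hs'|]. repeat apply Forall2_app; auto.
Qed.

Local Open Scope R_scope.

(** * Finite sums *)

Definition sumR {A : Type} (f : A -> R) (L : list A) : R :=
  fold_right (fun x acc => f x + acc) 0 L.

Lemma sumR_app {A} (f : A -> R) L1 L2 : sumR f (L1 ++ L2) = sumR f L1 + sumR f L2.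
Proof. induction L1; simpl; [lra|]. rewrite IHL1. lra. Qed.

Lemma sumR_map {A B} (f : B -> R) (g : A -> B) L : sumR f (map g L) = sumR (fun x => f (g x)) L.
Proof. induction L; simpl; auto. now rewrite IHL. Qed.

Lemma sumR_flat_map {A B} (f : B -> R) (g : A -> list B) L :
  sumR f (flat_map g L) = sumR (fun x => sumR f (g x)) L.
Proof. induction L; simpl; auto. now rewrite sumR_app, IHL. Qed.

Lemma sumR_le {A} (f g : A -> R) L : (forall x, In x L -> f x <= g x) -> sumR f L <= sumR g L.
Proof.
  induction L; intros H; simpl; [lra|].
  apply Rplus_le_compat; [apply H; simpl; auto | apply IHL; intros; apply H; simpl; auto].
Qed.

Lemma sumR_ext {A} (f g : A -> R) L : (forall x, In x L -> f x = g x) -> sumR f L = sumR g L.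
Proof.
  induction L; intros H; simpl; auto.
  rewrite H, IHL; simpl; auto. intros; apply H; simpl; auto.
Qed.

Lemma sumR_le_const {A} (f : A -> R) L M :
  (forall x, In x L -> f x <= M) -> sumR f L <= INR (length L) * M.
Proof.
  induction L as [|a L IH]; intros H; [simpl; lra|].
  change (f a + sumR f L <= INR (S (length L)) * M). rewrite S_INR.
  assert (f a <= M) by (apply H; simpl; auto).
  assert (sumR f L <= INR (length L) * M) by (apply IH; intros; apply H; simpl; auto). lra.
Qed.

Lemma sumR_scal {A} (f : A -> R) L c : sumR (fun x => c * f x) L = c * sumR f L.
Proof. induction L; simpl; [lra|]. rewrite IHL. lra. Qed.

Lemma sumR_plus {A} (f g : A -> R) L : sumR (fun x => f x + g x) L = sumR f L + sumR g L.
Proof. induction L; simpl; [lra|]. rewrite IHL. lra. Qed.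

Lemma sumR_filter {A} (f : A -> R) (p : A -> bool) L :
  sumR f L = sumR f (filter p L) + sumR f (filter (fun x => negb (p x)) L).
Proof. induction L; simpl; [lra|]. destruct (p a); simpl; rewrite IHL; lra. Qed.

Lemma sum_inv_sq_seq n : sumR (fun k => / INR (S k) ^ 2) (seq 0 n) <= 2 - 2 / INR (S n).
Proof.
  induction n as [|n IH]; [simpl; lra|].
  rewrite seq_S, sumR_app, Nat.add_0_l.
  change (sumR (fun k => / INR (S k) ^ 2) [n]) with (/ INR (S n) ^ 2 + 0).
  rewrite (S_INR (S n)).
  set (x := INR (S n)) in *. assert (Hx : 1 <= x) by (apply (le_INR 1); lia).
  assert (E : 2 / x - 2 / (x + 1) - / x ^ 2 = (x - 1) / (x ^ 2 * (x + 1))) by (field; lra).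
  assert (0 <= (x - 1) / (x ^ 2 * (x + 1))).
  { apply Rmult_le_pos; [lra|]. left. apply Rinv_0_lt_compat. nra. }
  lra.
Qed.

Lemma sum_inv_sq_le_2 n : sumR (fun k => / INR (S k) ^ 2) (seq 0 n) <= 2.
Proof.
  pose proof (sum_inv_sq_seq n).
  assert (0 <= 2 / INR (S n)).
  { apply Rmult_le_pos; [lra | left; apply Rinv_0_lt_compat, lt_0_INR; lia]. }
  lra.
Qed.

Lemma sumR_decomps_fst {A} (r : list A) (g : nat -> R) :
  sumR (fun t => g (length (fst (fst t)))) (decomps r) = sumR g (seq 0 (length r)).
Proof.
  revert g; induction r as [|x r IH]; intros g; [reflexivity|].
  simpl decomps. simpl length. rewrite <- cons_seq, <- seq_shift.
  cbn [sumR fold_right]. fold (sumR g (map S (seq 0 (length r)))).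
  fold (sumR (fun t => g (length (fst (fst t))))
          (map (fun '(a, e, b) => (x :: a, e, b)) (decomps r))).
  rewrite !sumR_map, <- IH. f_equal. apply sumR_ext. now intros [[a e] b] _.
Qed.

Lemma sumR_decomps_snd {A} (r : list A) (g : nat -> R) :
  sumR (fun t => g (length (snd t))) (decomps r) = sumR g (seq 0 (length r)).
Proof.
  induction r as [|x r IH]; [reflexivity|].
  simpl decomps. simpl length. rewrite seq_S, sumR_app, Nat.add_0_l.
  cbn [sumR fold_right]. fold (sumR (fun t => g (length (snd t)))
          (map (fun '(a, e, b) => (x :: a, e, b)) (decomps r))).
  rewrite sumR_map, <- IH.
  rewrite (sumR_ext _ (fun t => g (length (snd t)))) by now intros [[a e] b] _.
  simpl. lra.
Qed.

(** * Weights *)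

Definition loop_weight (m : nat) : R :=
  match m with O => 1 | S _ => 64 ^ m / (64 * INR m ^ 2) end.

Definition seq_weight (s : lseq) : R :=
  fold_right (fun l acc => loop_weight (length l) * acc) 1 s.

Lemma loop_weight_S m : (1 <= m)%nat -> loop_weight m = 64 ^ m / (64 * INR m ^ 2).
Proof. destruct m; [lia | reflexivity]. Qed.

Lemma loop_weight_le_S m : loop_weight m <= loop_weight (S m).
Proof.
  destruct m as [|m]; [simpl; lra|].
  rewrite !loop_weight_S, (S_INR (S m)), <- (tech_pow_Rmult 64 (S m)) by lia.
  set (x := INR (S m)). assert (Hx : 1 <= x) by (apply (le_INR 1); lia).
  set (P := 64 ^ S m). assert (HP : 0 < P) by (apply pow_lt; lra).
  assert (E : 64 * P / (64 * (x + 1) ^ 2) - P / (64 * x ^ 2)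
              = P * (64 * x ^ 2 - (x + 1) ^ 2) / (64 * x ^ 2 * (x + 1) ^ 2)) by (field; lra).
  assert (0 <= P * (64 * x ^ 2 - (x + 1) ^ 2) / (64 * x ^ 2 * (x + 1) ^ 2)).
  { apply Rmult_le_pos; [apply Rmult_le_pos; nra | left; apply Rinv_0_lt_compat; nra]. }
  lra.
Qed.

Lemma loop_weight_mono j t : (j <= t)%nat -> loop_weight j <= loop_weight t.
Proof. induction 1; [lra | eapply Rle_trans; [exact IHle | apply loop_weight_le_S]]. Qed.

Lemma loop_weight_pos m : 0 < loop_weight m.
Proof. pose proof (loop_weight_mono 0 m ltac:(lia)). simpl in H. lra. Qed.

Lemma loop_weight_add4 m : (1 <= m)%nat -> loop_weight (m + 4) <= 64 ^ 4 * loop_weight m.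
Proof.
  intros Hm. rewrite !loop_weight_S, pow_add, plus_INR by lia.
  set (x := INR m). assert (Hx : 1 <= x) by (apply (le_INR 1); lia).
  set (P := 64 ^ m). assert (HP : 0 < P) by (apply pow_lt; lra).
  replace (INR 4) with 4 by (simpl; lra).
  assert (E : 64 ^ 4 * (P / (64 * x ^ 2)) - P * 64 ^ 4 / (64 * (x + 4) ^ 2)
              = P * 64 ^ 4 * ((x + 4) ^ 2 - x ^ 2) / (64 * x ^ 2 * (x + 4) ^ 2)) by (field; lra).
  assert (0 <= P * 64 ^ 4 * ((x + 4) ^ 2 - x ^ 2) / (64 * x ^ 2 * (x + 4) ^ 2)).
  { apply Rmult_le_pos; [apply Rmult_le_pos; nra | left; apply Rinv_0_lt_compat; nra]. }
  lra.
Qed.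

(** The inequality that makes splittings affordable: it is [(x - y)^2 >= 0] in disguise. *)
Lemma loop_weight_mul t u : (1 <= t)%nat -> (1 <= u)%nat ->
  loop_weight t * loop_weight u
  <= 2 / 64 * loop_weight (t + u) * (/ INR t ^ 2 + / INR u ^ 2).
Proof.
  intros Ht Hu. rewrite !loop_weight_S, pow_add, plus_INR by lia.
  set (x := INR t). assert (Hx : 1 <= x) by (apply (le_INR 1); lia).
  set (y := INR u). assert (Hy : 1 <= y) by (apply (le_INR 1); lia).
  set (P := 64 ^ t). assert (HP : 0 < P) by (apply pow_lt; lra).
  set (Q := 64 ^ u). assert (HQ : 0 < Q) by (apply pow_lt; lra).
  assert (E : 2 / 64 * (P * Q / (64 * (x + y) ^ 2)) * (/ x ^ 2 + / y ^ 2)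
              - P / (64 * x ^ 2) * (Q / (64 * y ^ 2))
              = P * Q * (x - y) ^ 2 / (64 * 64 * x ^ 2 * y ^ 2 * (x + y) ^ 2))
    by (field; repeat split; lra).
  assert (0 <= P * Q * (x - y) ^ 2 / (64 * 64 * x ^ 2 * y ^ 2 * (x + y) ^ 2)).
  { apply Rmult_le_pos; [apply Rmult_le_pos; [nra | apply pow2_ge_0] |].
    left. apply Rinv_0_lt_compat. repeat apply Rmult_lt_0_compat; nra. }
  lra.
Qed.

Lemma seq_weight_app a b : seq_weight (a ++ b) = seq_weight a * seq_weight b.
Proof. induction a; simpl; [lra|]. rewrite IHa. lra. Qed.

Lemma seq_weight_nonneg s : 0 <= seq_weight s.
Proof.
  induction s; simpl; [lra|]. apply Rmult_le_pos; auto. apply Rlt_le, loop_weight_pos.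
Qed.

Lemma seq_weight_nn_le r t : (length r <= t)%nat -> seq_weight (nn r) <= loop_weight t.
Proof.
  intros H. destruct r as [|x r].
  - apply (loop_weight_mono 0). lia.
  - unfold nn, seq_weight, fold_right. rewrite Rmult_1_r. now apply loop_weight_mono.
Qed.

(** * The one-step inequality *)

Definition small_beta (d : nat) (beta : R) : Prop :=
  Rabs beta * INR (deform_count d) * 64 ^ 4 <= / 2.

Definition kind_coeff (beta : R) (k : kind) : R :=
  match k with PosDef | NegDef => Rabs beta | PosSplit | NegSplit => 1 end.

Definition cand_weight (beta : R) (kr : kind * lseq) : R :=
  kind_coeff beta (fst kr) * seq_weight (snd kr).

Lemma seq_weight_pair_le p q t u :
  (length p <= t)%nat -> (length q <= u)%nat ->
  seq_weight (nn (cyc_red p) ++ nn (cyc_red q)) <= loop_weight t * loop_weight u.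
Proof.
  intros Hp Hq. rewrite seq_weight_app.
  apply Rmult_le_compat; try apply seq_weight_nonneg; apply seq_weight_nn_le;
    eapply Nat.le_trans; eauto using length_cyc_red.
Qed.

Lemma split_pairs_bound beta a x b c :
  sumR (cand_weight beta) (split_pairs a x b c)
  <= 4 * (loop_weight (length b + 1) * loop_weight (length a + length c + 1)).
Proof.
  set (T := loop_weight (length b + 1)). set (U := loop_weight (length a + length c + 1)).
  assert (H1 : seq_weight (nn (cyc_red (a ++ x :: c)) ++ nn (cyc_red (b ++ [x]))) <= U * T)
    by (apply seq_weight_pair_le; rewrite length_app; simpl; lia).
  assert (H2 : seq_weight (nn (cyc_red (b ++ [x])) ++ nn (cyc_red (a ++ x :: c))) <= T * U)
    by (apply seq_weight_pair_le; rewrite length_app; simpl; lia).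
  assert (H3 : seq_weight (nn (cyc_red (a ++ c)) ++ nn (cyc_red b)) <= U * T)
    by (apply seq_weight_pair_le; rewrite ?length_app; lia).
  assert (H4 : seq_weight (nn (cyc_red b) ++ nn (cyc_red (a ++ c))) <= T * U)
    by (apply seq_weight_pair_le; rewrite ?length_app; lia).
  unfold sumR, split_pairs, cand_weight; cbn [fold_right fst snd kind_coeff].
  rewrite (Rmult_comm U T) in H1, H3. lra.
Qed.

Lemma inv_sq_le_S A k : / INR (A + k + 1) ^ 2 <= / INR (S k) ^ 2.
Proof.
  assert (H1 : 0 < INR (S k)) by (apply lt_0_INR; lia).
  assert (H2 : INR (S k) <= INR (A + k + 1)) by (apply le_INR; lia).
  apply Rinv_le_contravar; [nra | apply pow_incr; lra].
Qed.

Lemma sum_inv_sq_decomps_fst {X} (r : list X) :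
  sumR (fun t => / INR (length (fst (fst t)) + 1) ^ 2) (decomps r) <= 2.
Proof.
  apply (Rle_trans _ (sumR (fun t => / INR (S (length (fst (fst t)))) ^ 2) (decomps r))).
  { apply sumR_le. intros t _. apply (inv_sq_le_S 0). }
  rewrite (sumR_decomps_fst r (fun k => / INR (S k) ^ 2)).
  apply sum_inv_sq_le_2.
Qed.

Lemma sum_inv_sq_decomps_snd {X} A (r : list X) :
  sumR (fun t => / INR (A + length (snd t) + 1) ^ 2) (decomps r) <= 2.
Proof.
  apply (Rle_trans _ (sumR (fun t => / INR (S (length (snd t))) ^ 2) (decomps r))).
  { apply sumR_le. intros t _. apply inv_sq_le_S. }
  rewrite (sumR_decomps_snd r (fun k => / INR (S k) ^ 2)).
  apply sum_inv_sq_le_2.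
Qed.

Lemma split_cands_at_bound beta a x r :
  sumR (cand_weight beta) (flat_map (fun '(b, _, c) => split_pairs a x b c) (decomps r))
  <= loop_weight (length a + length r + 1) / 2.
Proof.
  set (m := (length a + length r + 1)%nat).
  set (K := 4 * (2 / 64 * loop_weight m)).
  rewrite sumR_flat_map.
  apply (Rle_trans _ (sumR (fun t => K * (/ INR (length (fst (fst t)) + 1) ^ 2
                                          + / INR (length a + length (snd t) + 1) ^ 2))
                            (decomps r))).
  - apply sumR_le. intros [[b y] c] Hbc. apply decomps_spec in Hbc as ->.
    eapply Rle_trans; [apply split_pairs_bound|]. simpl fst; simpl snd.
    pose proof (loop_weight_mul (length b + 1) (length a + length c + 1)) as Hmul.
    replace (length b + 1 + (length a + length c + 1))%nat with m in Hmul
      by (unfold m; rewrite length_app; simpl; lia).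
    unfold K. specialize (Hmul ltac:(lia) ltac:(lia)). lra.
  - rewrite sumR_scal, sumR_plus.
    pose proof (sum_inv_sq_decomps_fst r). pose proof (sum_inv_sq_decomps_snd (length a) r).
    assert (0 <= K) by (pose proof (loop_weight_pos m); unfold K; lra).
    apply (Rle_trans _ (K * 4)); [apply Rmult_le_compat_l; lra | unfold K; lra].
Qed.

Lemma split_cands_bound beta l :
  sumR (cand_weight beta) (split_cands l) <= INR (length l) * (loop_weight (length l) / 2).
Proof.
  unfold split_cands. rewrite sumR_flat_map, <- (length_decomps l) at 1.
  apply sumR_le_const. intros [[a x] r] Hl. apply decomps_spec in Hl as ->.
  replace (length (a ++ x :: r)) with (length a + length r + 1)%nat
    by (rewrite length_app; simpl; lia).
  apply split_cands_at_bound.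
Qed.

Lemma deform_cands_bound d beta l :
  small_beta d beta ->
  sumR (cand_weight beta) (deform_cands d l) <= INR (length l) * (loop_weight (length l) / 2).
Proof.
  intros Hbeta. unfold deform_cands. rewrite sumR_flat_map, <- (length_decomps l) at 1.
  apply sumR_le_const. intros [[a e] b] Hl. apply decomps_spec in Hl as ->.
  rewrite sumR_map.
  set (m := length (a ++ e :: b)).
  apply (Rle_trans _ (INR (deform_count d) * (Rabs beta * (64 ^ 4 * loop_weight m)))).
  - rewrite <- (length_deform_inserts d e). apply sumR_le_const.
    intros [k X] HX. apply deform_inserts_spec in HX as [Hk HX].
    unfold cand_weight; simpl fst; simpl snd.
    replace (kind_coeff beta k) with (Rabs beta) by (destruct Hk as [-> | ->]; reflexivity).
    apply Rmult_le_compat_l; [apply Rabs_pos|].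
    eapply Rle_trans; [apply seq_weight_nn_le, length_cyc_red|].
    eapply Rle_trans; [apply loop_weight_mono | apply loop_weight_add4];
      unfold m; rewrite !length_app; simpl; lia.
  - unfold small_beta in Hbeta. pose proof (loop_weight_pos m). nra.
Qed.

Lemma loop_cands_bound d beta l :
  small_beta d beta ->
  sumR (cand_weight beta) (loop_cands d l) <= INR (length l) * loop_weight (length l).
Proof.
  intros Hbeta. unfold loop_cands. rewrite sumR_app.
  pose proof (deform_cands_bound d beta l Hbeta). pose proof (split_cands_bound beta l).
  lra.
Qed.

Lemma Rabs_w beta k s : Rabs (w beta k s) = kind_coeff beta k / INR (lsize s).
Proof.
  unfold w, kind_coeff, Rdiv.
  destruct k; rewrite Rabs_mult, Rabs_inv, (Rabs_pos_eq (INR _)) by apply pos_INR; f_equal;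
    first [reflexivity | apply Rabs_Ropp | apply Rabs_R1 | rewrite Rabs_left; lra].
Qed.

Lemma sumR_decomps_length (s : lseq) :
  sumR (fun t => INR (length (snd (fst t)))) (decomps s) = INR (lsize s).
Proof.
  induction s as [|x s IH]; [reflexivity|].
  simpl decomps. cbn [sumR fold_right]. fold (sumR (fun t => INR (length (snd (fst t))))
    (map (fun '(a, e, b) => (x :: a, e, b)) (decomps s))).
  rewrite sumR_map, (sumR_ext _ (fun t => INR (length (snd (fst t))))) by now intros [[a e] b] _.
  rewrite IH. simpl lsize. now rewrite plus_INR.
Qed.

Lemma cands_bound d beta s :
  small_beta d beta ->
  sumR (fun c => Rabs (w beta (fst c) s) * seq_weight (snd c)) (cands d s) <= seq_weight s.
Proof.
  intros Hbeta. set (n := INR (lsize s)).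
  assert (Hn : 0 <= / n).
  { destruct (Req_dec n 0) as [-> | E]; [rewrite Rinv_0; lra|].
    left. apply Rinv_0_lt_compat. pose proof (pos_INR (lsize s)). fold n in H. lra. }
  unfold cands. rewrite sumR_flat_map.
  apply (Rle_trans _ (sumR (fun t => seq_weight s / n * INR (length (snd (fst t)))) (decomps s))).
  - apply sumR_le. intros [[t1 l] t2] Ht. apply decomps_spec in Ht. rewrite sumR_map.
    rewrite (sumR_ext _ (fun kr => seq_weight t1 * seq_weight t2 / n * cand_weight beta kr))
      by (intros [k rs] _; cbn [fst snd]; rewrite Rabs_w, !seq_weight_app;
          fold n; unfold cand_weight, Rdiv; simpl; ring).
    rewrite sumR_scal.
    assert (0 <= seq_weight t1 * seq_weight t2 / n).
    { apply Rmult_le_pos; [apply Rmult_le_pos; apply seq_weight_nonneg | exact Hn]. }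
    eapply Rle_trans; [apply Rmult_le_compat_l; [assumption | apply loop_cands_bound, Hbeta]|].
    replace (seq_weight s) with (seq_weight t1 * (loop_weight (length l) * seq_weight t2))
      by (rewrite Ht, seq_weight_app; reflexivity).
    apply Req_le. simpl. unfold Rdiv. ring.
  - rewrite sumR_scal, sumR_decomps_length. fold n.
    destruct (Req_dec n 0) as [E | E].
    + rewrite E, Rmult_0_r. apply seq_weight_nonneg.
    + apply Req_le. field. exact E.
Qed.

(** * Induction on the length of trajectories *)

Lemma ForallOrdPairs_filter {A} (P : A -> A -> Prop) f L :
  ForallOrdPairs P L -> ForallOrdPairs P (filter f L).
Proof.
  induction L as [|a L IH]; intros H; simpl; auto. inversion_clear H as [|? ? Ha HL].
  destruct (f a); auto. constructor; auto.
  rewrite Forall_forall in *. intros x Hx. apply filter_In in Hx. apply Ha, Hx.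
Qed.

Lemma ForallOrdPairs_map {A B} (P : A -> A -> Prop) (Q : B -> B -> Prop) (f : A -> B) L :
  ForallOrdPairs P L -> (forall a b, In a L -> In b L -> P a b -> Q (f a) (f b)) ->
  ForallOrdPairs Q (map f L).
Proof.
  induction L as [|a L IH]; intros H Hf; simpl; constructor; inversion_clear H as [|? ? Ha HL].
  - rewrite Forall_forall in *. intros y Hy. apply in_map_iff in Hy as [x [<- Hx]].
    apply Hf; simpl; auto.
  - apply IH; auto. intros; apply Hf; simpl; auto.
Qed.

Lemma sum_le_by_classes {T X} (C : list X) (val : T -> R) (M : T -> X -> Prop) (bd : X -> R)
    (D : T -> T -> Prop) (Q : T -> Prop) :
  (forall c L', (forall t, In t L' -> M t c /\ Q t) -> ForallOrdPairs D L' ->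
     sumR val L' <= bd c) ->
  forall L, (forall t, In t L -> Q t /\ exists c, In c C /\ M t c) -> ForallOrdPairs D L ->
  sumR val L <= sumR bd C.
Proof.
  intros Hclass. induction C as [|c C IH]; intros L HL HD.
  - destruct L as [|t L]; [simpl; lra|]. exfalso.
    destruct (HL t) as [_ [c [[] _]]]. simpl; auto.
  - set (f := fun t => if excluded_middle_informative (M t c) then true else false).
    rewrite (sumR_filter _ f). apply Rplus_le_compat.
    + apply Hclass; [|now apply ForallOrdPairs_filter].
      intros t Ht. apply filter_In in Ht as [Ht Hf]. unfold f in Hf.
      destruct (excluded_middle_informative (M t c)); [|discriminate].
      split; auto. apply HL, Ht.
    + apply IH; [|now apply ForallOrdPairs_filter].
      intros t Ht. apply filter_In in Ht as [Ht Hf]. unfold f in Hf.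
      destruct (excluded_middle_informative (M t c)); [discriminate|].
      destruct (HL t Ht) as [Hq [c' [[<- | Hc'] Hm]]]; [contradiction | eauto].
Qed.

Lemma lsize_ls_eq s t : ls_eq s t -> lsize s = lsize t.
Proof. induction 1; simpl; auto. now rewrite (rot_eq_length _ _ H), IHForall2. Qed.

Lemma traj_weight_lsize beta s t st :
  lsize s = lsize t -> traj_weight beta s st = traj_weight beta t st.
Proof. intros H. destruct st as [|[k s'] st]; simpl; auto. unfold w. now rewrite H. Qed.

Lemma ls_eq_nil_r s : ls_eq s [] -> s = [].
Proof. now inversion 1. Qed.

Lemma vanishing_nil d st : vanishing d [] st -> st = [].
Proof.
  destruct st as [|[k s'] st]; auto. intros [[s1 [l [s2 [E _]]]] _].
  now destruct s1.
Qed.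

Definition vanishing_from (d : nat) (s : lseq) (st : list (kind * lseq)) : Prop :=
  exists s0, ls_eq s0 s /\ vanishing d s0 st.

Definition distinct_trajs (L : list (list (kind * lseq))) : Prop :=
  ForallOrdPairs (fun a b => ~ traj_eq a b) L.

Lemma sum_from_nil d beta L :
  (forall st, In st L -> vanishing_from d [] st) -> distinct_trajs L ->
  sumR (fun st => Rabs (traj_weight beta [] st)) L <= 1.
Proof.
  intros HL HD.
  assert (Hnil : forall st, In st L -> st = []).
  { intros st Hst. destruct (HL st Hst) as [s0 [Hs0 Hv]].
    apply ls_eq_nil_r in Hs0 as ->. now apply vanishing_nil in Hv. }
  destruct L as [|st1 [|st2 L]].
  - simpl; lra.
  - rewrite (Hnil st1) by (simpl; auto). simpl. rewrite Rabs_R1. lra.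
  - exfalso. inversion HD as [|? ? Hfst]; subst. inversion Hfst as [|? ? H12]; subst.
    apply H12. rewrite (Hnil st1), (Hnil st2) by (simpl; auto). exact I.
Qed.

Definition traj_bound (d : nat) (beta : R) (N : nat) : Prop :=
  forall s L, (forall st, In st L -> (length st <= N)%nat /\ vanishing_from d s st) ->
    distinct_trajs L -> sumR (fun st => Rabs (traj_weight beta s st)) L <= seq_weight s.

Lemma traj_bound_0 d beta : traj_bound d beta 0.
Proof.
  intros [|l s] L HL HD.
  - apply (sum_from_nil d); auto. intros st Hst. apply HL, Hst.
  - destruct L as [|st L]; [exact (seq_weight_nonneg _)|]. exfalso.
    destruct (HL st) as [Hlen [s0 [Hs0 Hv]]]; [simpl; auto|].
    destruct st; [|simpl in Hlen; lia]. simpl in Hv. subst s0. inversion Hs0.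
Qed.

Definition starts_with (st : list (kind * lseq)) (c : kind * lseq) : Prop :=
  exists s' st', st = (fst c, s') :: st' /\ ls_eq s' (snd c).

Lemma class_bound d beta N s c L :
  traj_bound d beta N ->
  (forall st, In st L -> starts_with st c /\ (length st <= S N)%nat /\ vanishing_from d s st) ->
  distinct_trajs L ->
  sumR (fun st => Rabs (traj_weight beta s st)) L <= Rabs (w beta (fst c) s) * seq_weight (snd c).
Proof.
  intros IH HL HD.
  rewrite (sumR_ext _
    (fun st => Rabs (w beta (fst c) s) * Rabs (traj_weight beta (snd c) (tl st)))).
  2:{ intros st Hst. destruct (HL st Hst) as [[s' [st' [-> Hs']]] _]. simpl.
      rewrite Rabs_mult. f_equal. f_equal. apply traj_weight_lsize, lsize_ls_eq, Hs'. }
  rewrite sumR_scal. apply Rmult_le_compat_l; [apply Rabs_pos|].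
  rewrite <- (sumR_map (fun t => Rabs (traj_weight beta (snd c) t)) (@tl _)).
  apply IH.
  - intros t Ht. apply in_map_iff in Ht as [st [<- Hst]].
    destruct (HL st Hst) as [[s' [st' [-> Hs']]] [Hlen [s0 [_ Hv]]]].
    simpl in *. split; [lia|]. exists s'. split; [exact Hs' | apply Hv].
  - apply ForallOrdPairs_map with (P := fun a b => ~ traj_eq a b); auto.
    intros a b Ha Hb Hab Htl. apply Hab.
    destruct (HL a Ha) as [[sa [sta [-> Hsa]]] _].
    destruct (HL b Hb) as [[sb [stb [-> Hsb]]] _].
    simpl in *. repeat split; auto. eapply ls_eq_trans; [exact Hsa | now apply ls_eq_sym].
Qed.

Lemma traj_bound_S d beta N :
  small_beta d beta ->
  traj_bound d beta N -> traj_bound d beta (S N).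
Proof.
  intros Hbeta IH [|l s] L HL HD.
  - apply (sum_from_nil d); auto. intros st Hst. apply HL, Hst.
  - eapply Rle_trans; [|apply (cands_bound d beta (l :: s) Hbeta)].
    apply (sum_le_by_classes (cands d (l :: s)) _ starts_with
             (fun c => Rabs (w beta (fst c) (l :: s)) * seq_weight (snd c))
             (fun a b => ~ traj_eq a b)
             (fun st => (length st <= S N)%nat /\ vanishing_from d (l :: s) st)); auto.
    + intros c L' HL' HD'. apply (class_bound d beta N); auto.
    + intros st Hst. destruct (HL st Hst) as [Hlen [s0 [Hs0 Hv]]].
      split; [split; [exact Hlen | now exists s0]|].
      destruct st as [|[k s'] st'].
      * simpl in Hv. subst s0. inversion Hs0.
      * destruct Hv as [Hstep _].
        destruct (step_covered d k s0 (l :: s) s' Hs0 Hstep) as [c [Hc [Hk Hs']]].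
        exists c. split; [exact Hc|]. exists s', st'. now subst k.
Qed.

Lemma traj_bound_all d beta N : small_beta d beta -> traj_bound d beta N.
Proof. intros Hbeta. induction N; auto using traj_bound_0, traj_bound_S. Qed.

Definition beta_threshold (d : nat) : R := / (2 * (INR (deform_count d) * 64 ^ 4 + 1)).

Lemma beta_threshold_pos d : 0 < beta_threshold d.
Proof.
  apply Rinv_0_lt_compat.
  assert (0 <= INR (deform_count d) * 64 ^ 4)
    by (apply Rmult_le_pos; [apply pos_INR | apply pow_le; lra]).
  lra.
Qed.

Lemma small_beta_of_le d beta : Rabs beta <= beta_threshold d -> small_beta d beta.
Proof.
  unfold small_beta, beta_threshold. rewrite Rmult_assoc. set (K := INR (deform_count d) * 64 ^ 4).
  assert (HK : 0 <= K) by (apply Rmult_le_pos; [apply pos_INR | apply pow_le; lra]).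
  intros Hbeta. apply (Rle_trans _ (/ (2 * (K + 1)) * (K + 1))); [|right; field; lra].
  pose proof (Rabs_pos beta). nra.
Qed.

Lemma length_le_list_max {A} (L : list (list A)) x :
  In x L -> (length x <= list_max (map (@length A) L))%nat.
Proof.
  intros Hx. assert (Hmax := proj1 (list_max_le (map (@length A) L) _) (le_n _)).
  rewrite Forall_forall in Hmax. apply Hmax, in_map, Hx.
Qed.

Theorem theorem11p1 : forall d : nat, (2 <= d)%nat ->
  exists beta2 : R, 0 < beta2 /\
    forall beta : R, Rabs beta <= beta2 ->
    forall s : lseq, is_lseq d s -> s <> nil -> summable_traj d beta s.
Proof.
  intros d _.
  exists (beta_threshold d). split; [apply beta_threshold_pos|].
  intros beta Hbeta s _ _. exists (seq_weight s). intros L HL HD.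
  apply (traj_bound_all d beta (list_max (map (@length _) L)) (small_beta_of_le d beta Hbeta));
    [|exact HD].
  intros st Hst. split; [now apply length_le_list_max|].
  exists s. split; [apply ls_eq_refl | apply HL, Hst].
Qed.
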